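(* Let $L\ge0$ and $R\ge1$ be integers and let $V$ be the space of $R$-tuples $f=(f[1],\ldots,f[R])$ of functions on the sphere $S^2$ of the form $f[r](\theta,\varphi)=\sum_{\ell=0}^L\sum_{m=-\ell}^\ell A_\ell^m[r]\,Y_\ell^m(\theta,\varphi)$ with $A_\ell^m[r]\in\mathbb C$, on which $SO(3)$ acts shell-wise by $(g\cdot f)[r](x)=f[r](g^{-1}x)$. Let $T$ be the tomographic (slice) operator $T h(\varphi)=h(\pi/2,\varphi)$ restricting a function on $S^2$ to the equator. Define the unprojected second moment of $f$ as the collection of functions $$m^2_f[r_1,r_2](\theta_1,\varphi_1,\theta_2,\varphi_2)=\int_{SO(3)}(g\cdot f)[r_1](\theta_1,\varphi_1)\,\overline{(g\cdot f)[r_2](\theta_2,\varphi_2)}\,dg,\quad r_1,r_2\in\{1,\ldots,R\},$$ and the projected (cryo-EM) second moment as $$\int_{SO(3)}T\big((g\cdot f)[r_1]\big)(\varphi_1)\,\overline{T\big((g\cdot f)[r_2]\big)(\varphi_2)}\,dg,\quad r_1,r_2\in\{1,\ldots,R\}.$$ Then the projected second moment of $f$ determines the unprojected second moment of $f$ and conversely; in particular, for $f,f'\in V$ the projected second moments coincide if and only if the unprojected second moments coincide.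
   Context: $Y_\ell^m$ ($-\ell\le m\le\ell$) are the spherical harmonics of degree $\ell$, forming an orthonormal basis of the $(2\ell+1)$-dimensional irreducible representation of $SO(3)$; $(\theta,\varphi)$ are spherical coordinates; $dg$ is the normalized Haar measure on $SO(3)$. In cryo-EM, $f$ models a radially discretized (with $R$ shells), bandlimited (bandlimit $L$) Fourier transform of a 3-D structure, and by the Fourier slice theorem the tomographic projection corresponds to restriction to a central plane, here the equator $\theta=\pi/2$. *)

From Stdlib Require Import Reals ZArith.
From Coquelicot Require Export Coquelicot.
Open Scope R_scope.

Fixpoint csum (F : nat -> C) (n : nat) : C :=
  match n with O => RtoC 0 | S k => Cplus (csum F k) (F k) end.

Definition vec3 := (R * R * R)%type.
Definition mat3 := nat -> nat -> R.   (* entries g i j, i,j in {0,1,2} *)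

Definition vcoord (x : vec3) (i : nat) : R :=
  match x with (a, b, c) => match i with 0%nat => a | 1%nat => b | _ => c end end.

Definition mat_mul (g h : mat3) : mat3 :=
  fun i j => g i 0%nat * h 0%nat j + g i 1%nat * h 1%nat j + g i 2%nat * h 2%nat j.

Definition mat_vec (g : mat3) (x : vec3) : vec3 :=
  (g 0%nat 0%nat * vcoord x 0 + g 0%nat 1%nat * vcoord x 1 + g 0%nat 2%nat * vcoord x 2,
   g 1%nat 0%nat * vcoord x 0 + g 1%nat 1%nat * vcoord x 1 + g 1%nat 2%nat * vcoord x 2,
   g 2%nat 0%nat * vcoord x 0 + g 2%nat 1%nat * vcoord x 1 + g 2%nat 2%nat * vcoord x 2).

Definition transpose (g : mat3) : mat3 := fun i j => g j i.

(* For g in SO(3), g^{-1} = g^T. *)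
Definition rot_inv_apply (g : mat3) (x : vec3) : vec3 := mat_vec (transpose g) x.

Definition Rz (a : R) : mat3 := fun i j =>
  match i, j with
  | 0%nat, 0%nat => cos a | 0%nat, 1%nat => - sin a
  | 1%nat, 0%nat => sin a | 1%nat, 1%nat => cos a
  | 2%nat, 2%nat => 1 | _, _ => 0 end.
Definition Ry (b : R) : mat3 := fun i j =>
  match i, j with
  | 0%nat, 0%nat => cos b | 0%nat, 2%nat => sin b
  | 2%nat, 0%nat => - sin b | 2%nat, 2%nat => cos b
  | 1%nat, 1%nat => 1 | _, _ => 0 end.

Definition euler (a b c : R) : mat3 := mat_mul (Rz a) (mat_mul (Ry b) (Rz c)).

(* Integral of F : SO(3) -> C against the normalized Haar measure dg,
   written in ZYZ Euler angles: dg = sin b da db dc / (8 pi^2). *)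
Definition haar_int (F : mat3 -> C) : C :=
  Cmult (RtoC (/ (8 * PI ^ 2)))
    (RInt (V := C_R_CompleteNormedModule) (fun a =>
       RInt (V := C_R_CompleteNormedModule) (fun b =>
         RInt (V := C_R_CompleteNormedModule) (fun c => Cmult (RtoC (sin b)) (F (euler a b c))) 0 (2 * PI)) 0 PI) 0 (2 * PI)).

Definition sph (theta phi : R) : vec3 :=
  (sin theta * cos phi, sin theta * sin phi, cos theta).

(* Legendre polynomial via Rodrigues: P_l(x) = 1/(2^l l!) d^l/dx^l (x^2-1)^l;
   dLeg l k x = d^k/dx^k P_l (x). *)
Definition dLeg (l k : nat) (x : R) : R :=
  / (2 ^ l * INR (fact l)) * Derive_n (fun t => (t ^ 2 - 1) ^ l) (l + k) x.

Definition Ynorm (l k : nat) : R :=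
  sqrt ((2 * INR l + 1) / (4 * PI) * INR (fact (l - k)) / INR (fact (l + k))).

(* For m = k >= 0:  Y_l^k(theta,phi) = N_lk P_l^k(cos theta) e^{i k phi} with
   P_l^k(x) = (-1)^k (1-x^2)^{k/2} d^k/dx^k P_l(x) (Condon-Shortley phase).
   On the unit sphere, (1-cos^2 theta)^{k/2} e^{ik phi} = (x + i y)^k, so as a
   function of the point (x,y,z) in S^2: *)
Definition Ypos (l k : nat) (p : vec3) : C :=
  Cmult (RtoC (Ynorm l k * (-1) ^ k * dLeg l k (vcoord p 2)))
        (Cpow (vcoord p 0, vcoord p 1) k).

Definition Ylm (l : nat) (m : Z) (p : vec3) : C :=
  if (0 <=? m)%Z then Ypos l (Z.to_nat m) p
  else Cmult (RtoC ((-1) ^ Z.abs_nat m)) (Cconj (Ypos l (Z.abs_nat m) p)).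

(* An element f of V is given by its coefficients A r l m (shell r, degree l, order m):
   f[r](p) = sum_{l=0}^{L} sum_{m=-l}^{l} A r l m Y_l^m(p). *)
Definition coeffs := nat -> nat -> Z -> C.

Definition shell (L : nat) (A : coeffs) (r : nat) (p : vec3) : C :=
  csum (fun l =>
    csum (fun k => let m := (Z.of_nat k - Z.of_nat l)%Z in Cmult (A r l m) (Ylm l m p))
         (2 * l + 1)) (L + 1).

Definition act_shell (L : nat) (A : coeffs) (g : mat3) (r : nat) (p : vec3) : C :=
  shell L A r (rot_inv_apply g p).

Definition tomo (h : R -> R -> C) (phi : R) : C := h (PI / 2) phi.

Definition m2 (L : nat) (A : coeffs) (r1 r2 : nat) (th1 ph1 th2 ph2 : R) : C :=
  haar_int (fun g =>
    Cmult (act_shell L A g r1 (sph th1 ph1)) (Cconj (act_shell L A g r2 (sph th2 ph2)))).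

Definition m2proj (L : nat) (A : coeffs) (r1 r2 : nat) (ph1 ph2 : R) : C :=
  haar_int (fun g =>
    Cmult (tomo (fun th ph => act_shell L A g r1 (sph th ph)) ph1)
          (Cconj (tomo (fun th ph => act_shell L A g r2 (sph th ph)) ph2))).

From Stdlib Require Import Reals ZArith Lra Lia List FunctionalExtensionality.
From Coquelicot Require Import Coquelicot.
Open Scope R_scope.

(* Both moments are values of M(p1, p2) = int f[r1](g^-1 p1) conj(f[r2](g^-1 p2)) dg on
   pairs of unit vectors, the projected one being M restricted to pairs on the equator.
   Left invariance of the Haar measure gives M(Q p1, Q p2) = M(p1, p2) for every rotation
   Q, and any pair of unit vectors can be rotated onto a pair on the equator, so M is
   determined by its equatorial values.
   Left invariance is proved for the rotations Ry t and Rz t in Euler coordinates: as a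
   function of (t, a, b, c), the integrand evaluated at g = R(t) euler(a, b, c) is
   annihilated by the first-order operator generating the left action, and this vector
   field is divergence-free for sin b da db dc, so d/dt of the integral vanishes after
   integration by parts (over the periodic angles a, c, and over b in [0, pi], where
   sin b vanishes at both ends). All integrands are trigonometric polynomials in
   (t, a, b, c), on which differentiation under the integral sign is a formal identity. *)

(** * Trigonometric polynomials in several angles *)

Definition upd {A : Type} (x : nat -> A) (v : nat) (t : A) : nat -> A :=
  fun w => if Nat.eqb w v then t else x w.

Lemma upd_eq {A} (x : nat -> A) v t : upd x v t v = t.
Proof. unfold upd. now rewrite Nat.eqb_refl. Qed.

Lemma upd_neq {A} (x : nat -> A) v t w : w <> v -> upd x v t w = x w.
Proof. intros H. unfold upd. now destruct (Nat.eqb_spec w v). Qed.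

Lemma upd_same {A} (x : nat -> A) v : upd x v (x v) = x.
Proof.
  apply functional_extensionality; intro w; unfold upd.
  now destruct (Nat.eqb_spec w v); subst.
Qed.

Lemma upd_comm {A} (x : nat -> A) v t w s :
  v <> w -> upd (upd x v t) w s = upd (upd x w s) v t.
Proof.
  intros H. apply functional_extensionality; intro u. unfold upd.
  destruct (Nat.eqb_spec u w), (Nat.eqb_spec u v); subst; try lia; reflexivity.
Qed.

Fixpoint prod_upto (n : nat) (f : nat -> R) : R :=
  match n with O => 1 | S k => prod_upto k f * f k end.

Lemma prod_upto_ext n f g :
  (forall w, (w < n)%nat -> f w = g w) -> prod_upto n f = prod_upto n g.
Proof.
  induction n as [|n IH]; intros H; simpl; [reflexivity|].
  rewrite IH by (intros; apply H; lia). rewrite H by lia. reflexivity.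
Qed.

Lemma prod_upto_mult n f g :
  prod_upto n (fun w => f w * g w) = prod_upto n f * prod_upto n g.
Proof. induction n as [|n IH]; simpl; [ring|]. rewrite IH. ring. Qed.

Lemma prod_upto_one n : prod_upto n (fun _ => 1) = 1.
Proof. induction n as [|n IH]; simpl; [ring|]. rewrite IH. ring. Qed.

Lemma prod_upto_split n v f : (v < n)%nat ->
  prod_upto n f = f v * prod_upto n (upd f v 1).
Proof.
  induction n as [|n IH]; intros Hv; [lia|]. simpl.
  destruct (Nat.eq_dec v n) as [->|Hne].
  - rewrite upd_eq, (prod_upto_ext n (upd f n 1) f); [ring|].
    intros w Hw. apply upd_neq. lia.
  - rewrite IH, upd_neq by lia. ring.
Qed.

Definition cos_sin_pow (e : nat * nat) (t : R) : R := cos t ^ fst e * sin t ^ snd e.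

Lemma cos_sin_pow_00 t : cos_sin_pow (0, 0)%nat t = 1.
Proof. unfold cos_sin_pow. simpl. ring. Qed.

Lemma cos_sin_pow_add p1 q1 p2 q2 t :
  cos_sin_pow (p1 + p2, q1 + q2)%nat t = cos_sin_pow (p1, q1) t * cos_sin_pow (p2, q2) t.
Proof. unfold cos_sin_pow; simpl. rewrite !pow_add. ring. Qed.

Lemma is_derive_cos_sin_pow p q t :
  is_derive (cos_sin_pow (p, q)) t
    (- INR p * cos_sin_pow (pred p, S q) t + INR q * cos_sin_pow (S p, pred q) t).
Proof. unfold cos_sin_pow; cbn [fst snd]. auto_derive; [exact I|]. simpl. ring. Qed.

Section TrigPoly.

Variable n : nat.

(* [(c, e)] stands for [c * prod_(w < n) cos (x w) ^ p_w * sin (x w) ^ q_w], [e w = (p_w, q_w)]. *)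
Definition tmono := (R * (nat -> nat * nat))%type.
Definition tpoly := list tmono.

Definition tmono_eval (m : tmono) (x : nat -> R) : R :=
  fst m * prod_upto n (fun w => cos_sin_pow (snd m w) (x w)).

Fixpoint tpoly_eval (P : tpoly) (x : nat -> R) : R :=
  match P with nil => 0 | m :: Q => tmono_eval m x + tpoly_eval Q x end.

Lemma tpoly_eval_app P Q x : tpoly_eval (P ++ Q) x = tpoly_eval P x + tpoly_eval Q x.
Proof. induction P as [|m P IH]; simpl; [ring|]. rewrite IH. ring. Qed.

Definition tmono_cofactor (e : nat -> nat * nat) (v : nat) (x : nat -> R) : R :=
  prod_upto n (upd (fun w => cos_sin_pow (e w) (x w)) v 1).

Lemma tmono_eval_split c e v x : (v < n)%nat ->
  tmono_eval (c, e) x = c * tmono_cofactor e v x * cos_sin_pow (e v) (x v).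
Proof.
  intros Hv. unfold tmono_eval, tmono_cofactor.
  rewrite (prod_upto_split n v) by exact Hv. simpl; ring.
Qed.

Lemma tmono_cofactor_upd_exp e v pe x : tmono_cofactor (upd e v pe) v x = tmono_cofactor e v x.
Proof.
  apply prod_upto_ext. intros w _. unfold upd.
  destruct (Nat.eqb w v); reflexivity.
Qed.

Lemma tmono_cofactor_upd_var e v x t : tmono_cofactor e v (upd x v t) = tmono_cofactor e v x.
Proof.
  apply prod_upto_ext. intros w _. unfold upd.
  destruct (Nat.eqb w v); reflexivity.
Qed.

Ltac isolate_var v :=
  rewrite ?(tmono_eval_split _ _ v), ?tmono_cofactor_upd_exp, ?tmono_cofactor_upd_var, ?upd_eq
    by assumption.

Definition tmono_deriv (v : nat) (m : tmono) : tpoly :=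
  let (c, e) := m in
  let (p, q) := e v in
  (c * - INR p, upd e v (pred p, S q)) :: (c * INR q, upd e v (S p, pred q)) :: nil.

Definition tpoly_deriv (v : nat) (P : tpoly) : tpoly := flat_map (tmono_deriv v) P.

Lemma is_derive_tpoly_eval P v x t : (v < n)%nat ->
  is_derive (fun s => tpoly_eval P (upd x v s)) t (tpoly_eval (tpoly_deriv v P) (upd x v t)).
Proof.
  intros Hv. induction P as [|[c e] P IH]; simpl.
  - apply (is_derive_const 0).
  - rewrite tpoly_eval_app.
    apply (is_derive_plus (fun s => tmono_eval (c, e) (upd x v s))); [|exact IH].
    destruct (e v) as [p q] eqn:Ev. simpl tpoly_eval.
    isolate_var v.
    apply (is_derive_ext (fun s => c * tmono_cofactor e v x * cos_sin_pow (p, q) s)).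
    { intro s. isolate_var v. now rewrite Ev. }
    match goal with
    | |- is_derive _ _ ?D =>
        replace D with (c * tmono_cofactor e v x
                        * (- INR p * cos_sin_pow (pred p, S q) t
                           + INR q * cos_sin_pow (S p, pred q) t)) by ring
    end.
    apply is_derive_scal, is_derive_cos_sin_pow.
Qed.

Definition tmono_RInt (v : nat) (lo hi : R) (m : tmono) : tmono :=
  let (c, e) := m in (c * RInt (cos_sin_pow (e v)) lo hi, upd e v (0, 0)%nat).

Definition tpoly_RInt (v : nat) (lo hi : R) (P : tpoly) : tpoly := map (tmono_RInt v lo hi) P.

Lemma ex_RInt_cos_sin_pow e lo hi : ex_RInt (cos_sin_pow e) lo hi.
Proof.
  apply (ex_RInt_continuous (V := R_CompleteNormedModule)). intros t _.
  destruct e as [p q]. apply (ex_derive_continuous (cos_sin_pow (p, q))).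
  eexists. apply is_derive_cos_sin_pow.
Qed.

Lemma is_RInt_tpoly_eval P v x lo hi : (v < n)%nat ->
  is_RInt (fun t => tpoly_eval P (upd x v t)) lo hi (tpoly_eval (tpoly_RInt v lo hi P) x).
Proof.
  intros Hv. induction P as [|[c e] P IH]; simpl.
  - pose proof (is_RInt_const (V := R_NormedModule) lo hi 0) as H.
    unfold scal in H; simpl in H; unfold mult in H; simpl in H. now rewrite Rmult_0_r in H.
  - apply (is_RInt_plus (fun t => tmono_eval (c, e) (upd x v t))); [|exact IH].
    isolate_var v. rewrite cos_sin_pow_00.
    apply (is_RInt_ext (fun t => (c * tmono_cofactor e v x) * cos_sin_pow (e v) t)).
    { intros t _. now isolate_var v. }
    replace (c * RInt (cos_sin_pow (e v)) lo hi * tmono_cofactor e v x * 1)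
      with ((c * tmono_cofactor e v x) * RInt (cos_sin_pow (e v)) lo hi) by ring.
    apply (is_RInt_scal (V := R_NormedModule)), (RInt_correct (V := R_CompleteNormedModule)).
    apply ex_RInt_cos_sin_pow.
Qed.

Lemma tpoly_deriv_RInt_comm v w lo hi P x : v <> w ->
  tpoly_eval (tpoly_deriv w (tpoly_RInt v lo hi P)) x
  = tpoly_eval (tpoly_RInt v lo hi (tpoly_deriv w P)) x.
Proof.
  intros Hvw. induction P as [|[c e] P IH]; simpl; [reflexivity|].
  unfold tpoly_RInt in *. rewrite map_app, !tpoly_eval_app, IH.
  unfold tmono_deriv, tmono_RInt. rewrite upd_neq by auto.
  destruct (e w) as [p q]. simpl.
  rewrite !upd_neq, !(upd_comm e v _ w) by auto.
  unfold tmono_eval. cbn [fst snd]. ring.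
Qed.

Definition tmono_mul (m1 m2 : tmono) : tmono :=
  (fst m1 * fst m2,
   fun w => (fst (snd m1 w) + fst (snd m2 w), snd (snd m1 w) + snd (snd m2 w))%nat).

Definition tpoly_mul (P Q : tpoly) : tpoly := flat_map (fun m => map (tmono_mul m) Q) P.

Lemma tmono_eval_mul m1 m2 x : tmono_eval (tmono_mul m1 m2) x = tmono_eval m1 x * tmono_eval m2 x.
Proof.
  unfold tmono_eval, tmono_mul. cbn [fst snd].
  rewrite (prod_upto_ext n _
             (fun w => cos_sin_pow (snd m1 w) (x w) * cos_sin_pow (snd m2 w) (x w))).
  - rewrite prod_upto_mult. ring.
  - intros w _. destruct (snd m1 w), (snd m2 w). apply cos_sin_pow_add.
Qed.

Lemma tpoly_eval_mul P Q x : tpoly_eval (tpoly_mul P Q) x = tpoly_eval P x * tpoly_eval Q x.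
Proof.
  assert (Hmap : forall m, tpoly_eval (map (tmono_mul m) Q) x = tmono_eval m x * tpoly_eval Q x).
  { intro m. induction Q as [|m' Q IHQ]; simpl; [ring|]. rewrite IHQ, tmono_eval_mul. ring. }
  induction P as [|m P IH]; simpl; [ring|].
  unfold tpoly_mul in *. simpl. rewrite tpoly_eval_app, IH, Hmap. ring.
Qed.

Definition tpoly_const (c : R) : tpoly := (c, fun _ => (0, 0)%nat) :: nil.

Lemma tpoly_eval_const c x : tpoly_eval (tpoly_const c) x = c.
Proof.
  unfold tpoly_const. simpl. unfold tmono_eval. cbn [fst snd].
  rewrite (prod_upto_ext n _ (fun _ => 1)) by (intros; apply cos_sin_pow_00).
  rewrite prod_upto_one. ring.
Qed.

Definition tpoly_var (v : nat) (pe : nat * nat) : tpoly :=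
  (1, upd (fun _ => (0, 0)%nat) v pe) :: nil.

Lemma tpoly_eval_var v pe x : (v < n)%nat -> tpoly_eval (tpoly_var v pe) x = cos_sin_pow pe (x v).
Proof.
  intros Hv. unfold tpoly_var. simpl. isolate_var v. unfold tmono_cofactor.
  rewrite (prod_upto_ext n _ (fun _ => 1)), prod_upto_one; [ring|].
  intros w _. unfold upd. destruct (Nat.eqb w v); [reflexivity|apply cos_sin_pow_00].
Qed.

Lemma tpoly_eval_periodic P v x : tpoly_eval P (upd x v (2 * PI)) = tpoly_eval P (upd x v 0).
Proof.
  induction P as [|m P IH]; simpl; [reflexivity|]. rewrite IH. f_equal.
  unfold tmono_eval. f_equal. apply prod_upto_ext. intros w _. unfold upd.
  destruct (Nat.eqb w v); [|reflexivity].
  unfold cos_sin_pow. now rewrite cos_2PI, sin_2PI, cos_0, sin_0.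
Qed.

Definition trig_poly (f : (nat -> R) -> R) : Prop := exists P, forall x, f x = tpoly_eval P x.

Definition pderive (v : nat) (f : (nat -> R) -> R) (x : nat -> R) : R :=
  Derive (fun t => f (upd x v t)) (x v).

Definition pRInt (v : nat) (lo hi : R) (f : (nat -> R) -> R) (x : nat -> R) : R :=
  RInt (fun t => f (upd x v t)) lo hi.

Lemma trig_poly_ext f g : trig_poly f -> (forall x, f x = g x) -> trig_poly g.
Proof. intros [P HP] H. exists P. intro x. now rewrite <- H. Qed.

Lemma trig_poly_const c : trig_poly (fun _ => c).
Proof. exists (tpoly_const c). intro x. now rewrite tpoly_eval_const. Qed.

Lemma trig_poly_cos v : (v < n)%nat -> trig_poly (fun x => cos (x v)).
Proof.
  intros Hv. exists (tpoly_var v (1, 0)%nat). intro x.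
  rewrite tpoly_eval_var by exact Hv. unfold cos_sin_pow. simpl. ring.
Qed.

Lemma trig_poly_sin v : (v < n)%nat -> trig_poly (fun x => sin (x v)).
Proof.
  intros Hv. exists (tpoly_var v (0, 1)%nat). intro x.
  rewrite tpoly_eval_var by exact Hv. unfold cos_sin_pow. simpl. ring.
Qed.

Lemma trig_poly_plus f g : trig_poly f -> trig_poly g -> trig_poly (fun x => f x + g x).
Proof. intros [P HP] [Q HQ]. exists (P ++ Q). intro x. now rewrite tpoly_eval_app, HP, HQ. Qed.

Lemma trig_poly_mult f g : trig_poly f -> trig_poly g -> trig_poly (fun x => f x * g x).
Proof.
  intros [P HP] [Q HQ]. exists (tpoly_mul P Q). intro x. now rewrite tpoly_eval_mul, HP, HQ.
Qed.

Lemma trig_poly_opp f : trig_poly f -> trig_poly (fun x => - f x).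
Proof.
  intros H. apply (trig_poly_ext (fun x => -1 * f x)); [|intros; ring].
  apply trig_poly_mult; [apply trig_poly_const | exact H].
Qed.

Lemma pderive_tpoly_eval f P v x : (v < n)%nat -> (forall y, f y = tpoly_eval P y) ->
  pderive v f x = tpoly_eval (tpoly_deriv v P) x.
Proof.
  intros Hv HP. unfold pderive. rewrite (Derive_ext _ (fun t => tpoly_eval P (upd x v t))) by auto.
  apply is_derive_unique. rewrite <- (upd_same x v) at 2. now apply is_derive_tpoly_eval.
Qed.

Lemma pRInt_tpoly_eval f P v lo hi x : (v < n)%nat -> (forall y, f y = tpoly_eval P y) ->
  pRInt v lo hi f x = tpoly_eval (tpoly_RInt v lo hi P) x.
Proof.
  intros Hv HP. unfold pRInt. rewrite (RInt_ext _ (fun t => tpoly_eval P (upd x v t))) by auto.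
  apply (is_RInt_unique (V := R_CompleteNormedModule)). now apply is_RInt_tpoly_eval.
Qed.

Lemma trig_poly_pderive v f : (v < n)%nat -> trig_poly f -> trig_poly (pderive v f).
Proof. intros Hv [P HP]. exists (tpoly_deriv v P). intro x. now apply pderive_tpoly_eval. Qed.

Lemma trig_poly_pRInt v lo hi f : (v < n)%nat -> trig_poly f -> trig_poly (pRInt v lo hi f).
Proof. intros Hv [P HP]. exists (tpoly_RInt v lo hi P). intro x. now apply pRInt_tpoly_eval. Qed.

Lemma is_derive_trig_poly f v x t : (v < n)%nat -> trig_poly f ->
  is_derive (fun s => f (upd x v s)) t (pderive v f (upd x v t)).
Proof.
  intros Hv [P HP]. rewrite (pderive_tpoly_eval f P) by assumption.
  apply (is_derive_ext (fun s => tpoly_eval P (upd x v s))); [auto|].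
  now apply is_derive_tpoly_eval.
Qed.

Lemma is_RInt_trig_poly f v x lo hi : (v < n)%nat -> trig_poly f ->
  is_RInt (fun t => f (upd x v t)) lo hi (pRInt v lo hi f x).
Proof.
  intros Hv [P HP]. rewrite (pRInt_tpoly_eval f P) by assumption.
  apply (is_RInt_ext (fun t => tpoly_eval P (upd x v t))); [auto|].
  now apply is_RInt_tpoly_eval.
Qed.

Lemma pderive_ext v f g x : (forall y, f y = g y) -> pderive v f x = pderive v g x.
Proof. intros H. unfold pderive. apply Derive_ext. auto. Qed.

Lemma pderive_plus v f g x : (v < n)%nat -> trig_poly f -> trig_poly g ->
  pderive v (fun y => f y + g y) x = pderive v f x + pderive v g x.
Proof.
  intros Hv Hf Hg. rewrite <- (upd_same x v) at 2 3.
  apply is_derive_unique, (is_derive_plus (fun t => f (upd x v t)));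
    now apply is_derive_trig_poly.
Qed.

Lemma pderive_mult v f g x : (v < n)%nat -> trig_poly f -> trig_poly g ->
  pderive v (fun y => f y * g y) x = pderive v f x * g x + f x * pderive v g x.
Proof.
  intros Hv Hf Hg. rewrite <- (upd_same x v) at 2 3 4 5.
  apply is_derive_unique, (is_derive_mult (fun t => f (upd x v t)) (fun t => g (upd x v t)));
    [now apply is_derive_trig_poly .. | intros; apply Rmult_comm].
Qed.

Lemma pderive_indep v f x : (forall y t, f (upd y v t) = f y) -> pderive v f x = 0.
Proof.
  intros H. unfold pderive. rewrite (Derive_ext _ (fun _ => f x)) by apply H.
  apply Derive_const.
Qed.

Lemma pderive_sin v x : pderive v (fun y => sin (y v)) x = cos (x v).
Proof.
  unfold pderive. rewrite (Derive_ext _ sin) by (intros; now rewrite upd_eq).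
  apply is_derive_unique, is_derive_sin.
Qed.

Lemma pRInt_ext v lo hi f g x : (forall y, f y = g y) -> pRInt v lo hi f x = pRInt v lo hi g x.
Proof. intros H. unfold pRInt. apply RInt_ext. auto. Qed.

Lemma pRInt_plus v lo hi f g x : (v < n)%nat -> trig_poly f -> trig_poly g ->
  pRInt v lo hi (fun y => f y + g y) x = pRInt v lo hi f x + pRInt v lo hi g x.
Proof.
  intros Hv Hf Hg. apply (is_RInt_unique (V := R_CompleteNormedModule)).
  apply (is_RInt_plus (V := R_NormedModule)); now apply is_RInt_trig_poly.
Qed.

Lemma pRInt_scal v lo hi k f x : (v < n)%nat -> trig_poly f ->
  (forall t, k (upd x v t) = k x) ->
  pRInt v lo hi (fun y => k y * f y) x = k x * pRInt v lo hi f x.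
Proof.
  intros Hv Hf Hk. apply (is_RInt_unique (V := R_CompleteNormedModule)).
  apply (is_RInt_ext (fun t => k x * f (upd x v t))); [intros; now rewrite Hk|].
  apply (is_RInt_scal (V := R_NormedModule)). now apply is_RInt_trig_poly.
Qed.

Lemma pRInt_opp v lo hi f x : (v < n)%nat -> trig_poly f ->
  pRInt v lo hi (fun y => - f y) x = - pRInt v lo hi f x.
Proof.
  intros Hv Hf. rewrite (pRInt_ext v lo hi _ (fun y => (fun _ => -1) y * f y)) by (intros; ring).
  rewrite pRInt_scal by auto. ring.
Qed.

Lemma pRInt_pderive v lo hi f x : (v < n)%nat -> trig_poly f ->
  pRInt v lo hi (pderive v f) x = f (upd x v hi) - f (upd x v lo).
Proof.
  intros Hv Hf. apply (is_RInt_unique (V := R_CompleteNormedModule)).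
  apply (is_RInt_derive (fun t => f (upd x v t))).
  - intros t _. now apply is_derive_trig_poly.
  - intros t _. apply (ex_derive_continuous (fun s => pderive v f (upd x v s))).
    eexists. apply is_derive_trig_poly; [exact Hv|]. now apply trig_poly_pderive.
Qed.

Lemma pderive_pRInt_comm v w lo hi f x : (v < n)%nat -> (w < n)%nat -> v <> w -> trig_poly f ->
  pderive w (pRInt v lo hi f) x = pRInt v lo hi (pderive w f) x.
Proof.
  intros Hv Hw Hvw [P HP].
  rewrite (pderive_tpoly_eval _ (tpoly_RInt v lo hi P))
    by (auto; intros; now apply pRInt_tpoly_eval).
  rewrite (pRInt_tpoly_eval _ (tpoly_deriv w P)) by (auto; intros; now apply pderive_tpoly_eval).
  now apply tpoly_deriv_RInt_comm.
Qed.

Lemma trig_poly_periodic f v x : trig_poly f -> f (upd x v (2 * PI)) = f (upd x v 0).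
Proof. intros [P HP]. rewrite !HP. apply tpoly_eval_periodic. Qed.

Lemma trig_poly_pderive_0_const f v x t : (v < n)%nat -> trig_poly f ->
  (forall y, pderive v f y = 0) -> f (upd x v t) = f (upd x v 0).
Proof.
  intros Hv Hf H0. apply Rminus_diag_uniq. rewrite <- pRInt_pderive by assumption.
  unfold pRInt. rewrite (RInt_ext _ (fun _ => 0)) by auto.
  rewrite RInt_const. apply Rmult_0_r.
Qed.

End TrigPoly.

(** * Functions annihilated by a first-order differential operator *)

Fixpoint sum_upto (n : nat) (f : nat -> R) : R :=
  match n with O => 0 | S m => sum_upto m f + f m end.

Lemma sum_upto_ext n f g :
  (forall w, (w < n)%nat -> f w = g w) -> sum_upto n f = sum_upto n g.
Proof.
  induction n as [|n IH]; intros H; simpl; [reflexivity|].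
  rewrite IH by (intros; apply H; lia). rewrite H by lia. reflexivity.
Qed.

Lemma sum_upto_plus n f g : sum_upto n (fun w => f w + g w) = sum_upto n f + sum_upto n g.
Proof. induction n as [|n IH]; simpl; [ring|]. rewrite IH. ring. Qed.

Lemma sum_upto_scal n c f : sum_upto n (fun w => c * f w) = c * sum_upto n f.
Proof. induction n as [|n IH]; simpl; [ring|]. rewrite IH. ring. Qed.

Lemma sum_upto_zero n : sum_upto n (fun _ => 0) = 0.
Proof. induction n as [|n IH]; simpl; [reflexivity|]. rewrite IH. ring. Qed.

Inductive real_poly : (R -> R) -> Prop :=
| real_poly_const c : real_poly (fun _ => c)
| real_poly_id : real_poly (fun t => t)
| real_poly_plus f g : real_poly f -> real_poly g -> real_poly (fun t => f t + g t)
| real_poly_mult f g : real_poly f -> real_poly g -> real_poly (fun t => f t * g t)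
| real_poly_ext f g : real_poly f -> (forall t, f t = g t) -> real_poly g.

Lemma real_poly_is_derive f :
  real_poly f -> exists f', real_poly f' /\ forall t, is_derive f t (f' t).
Proof.
  induction 1 as [c| |f g _ [f' [Hf' Df]] _ [g' [Hg' Dg]]|f g Hf [f' [Hf' Df]] Hg [g' [Hg' Dg]]
                 |f g _ [f' [Hf' Df]] E].
  - exists (fun _ => 0). split; [constructor|]. intro t. apply (is_derive_const c).
  - exists (fun _ => 1). split; [constructor|]. intro t. apply (is_derive_id t).
  - exists (fun t => f' t + g' t). split; [now constructor|].
    intro t. now apply (is_derive_plus f g).
  - exists (fun t => f' t * g t + f t * g' t). split; [repeat constructor; auto|].
    intro t. apply (is_derive_mult f g); auto. intros; apply Rmult_comm.
  - exists f'. split; [exact Hf'|]. intro t. now apply (is_derive_ext f).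
Qed.

Lemma real_poly_Derive_n f m :
  real_poly f -> exists g, real_poly g /\ forall t, Derive_n f m t = g t.
Proof.
  intros Hf. induction m as [|m [g [Hg E]]]; [now exists f|].
  destruct (real_poly_is_derive g Hg) as [g' [Hg' Dg]]. exists g'. split; [exact Hg'|].
  intro t. simpl. rewrite (Derive_ext _ g) by exact E. now apply is_derive_unique.
Qed.

Lemma real_poly_pow f m : real_poly f -> real_poly (fun t => f t ^ m).
Proof. intros Hf. induction m; simpl; [apply real_poly_const | now apply (real_poly_mult f)]. Qed.

Lemma real_poly_dLeg l k : real_poly (dLeg l k).
Proof.
  assert (Hrod : real_poly (fun t => (t ^ 2 - 1) ^ l)).
  { apply (real_poly_pow (fun t => t ^ 2 - 1)), (real_poly_plus (fun t => t ^ 2) (fun _ => -1)).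
    - apply (real_poly_pow (fun t => t)), real_poly_id.
    - apply real_poly_const. }
  destruct (real_poly_Derive_n _ (l + k) Hrod) as [h [Hh E]].
  apply (real_poly_ext (fun t => / (2 ^ l * INR (fact l)) * h t)).
  - apply real_poly_mult; [apply real_poly_const | exact Hh].
  - intro t. unfold dLeg. now rewrite E.
Qed.

Section FirstOrderOperator.

Variable n : nat.
Variable k : nat -> (nat -> R) -> R.

Definition diff_op (f : (nat -> R) -> R) (x : nat -> R) : R :=
  sum_upto n (fun v => k v x * pderive v f x).

Definition annihilated (f : (nat -> R) -> R) : Prop :=
  trig_poly n f /\ forall x, diff_op f x = 0.

Lemma annihilated_ext f g : annihilated f -> (forall x, f x = g x) -> annihilated g.
Proof.
  intros [Hf Df] E. split; [now apply (trig_poly_ext n f)|]. intro x.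
  rewrite <- (Df x). apply sum_upto_ext. intros v _. now rewrite (pderive_ext v g f).
Qed.

Lemma annihilated_const c : annihilated (fun _ => c).
Proof.
  split; [apply trig_poly_const|]. intro x. rewrite <- (sum_upto_zero n).
  apply sum_upto_ext. intros v _. rewrite pderive_indep by reflexivity. ring.
Qed.

Lemma annihilated_plus f g : annihilated f -> annihilated g -> annihilated (fun x => f x + g x).
Proof.
  intros [Hf Df] [Hg Dg]. split; [now apply trig_poly_plus|]. intro x.
  unfold diff_op.
  rewrite (sum_upto_ext n _ (fun v => k v x * pderive v f x + k v x * pderive v g x)).
  - rewrite sum_upto_plus. unfold diff_op in Df, Dg. rewrite (Df x), (Dg x). ring.
  - intros v Hv. rewrite (pderive_plus n) by assumption. ring.
Qed.

Lemma annihilated_mult f g : annihilated f -> annihilated g -> annihilated (fun x => f x * g x).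
Proof.
  intros [Hf Df] [Hg Dg]. split; [now apply trig_poly_mult|]. intro x.
  unfold diff_op.
  rewrite (sum_upto_ext n _
             (fun v => g x * (k v x * pderive v f x) + f x * (k v x * pderive v g x))).
  - rewrite sum_upto_plus, !sum_upto_scal. unfold diff_op in Df, Dg. rewrite (Df x), (Dg x). ring.
  - intros v Hv. rewrite (pderive_mult n) by assumption. ring.
Qed.

Lemma annihilated_opp f : annihilated f -> annihilated (fun x => - f x).
Proof.
  intros H. apply (annihilated_ext (fun x => -1 * f x)); [|intros; ring].
  apply annihilated_mult; [apply annihilated_const | exact H].
Qed.

Lemma annihilated_minus f g : annihilated f -> annihilated g -> annihilated (fun x => f x - g x).
Proof. intros Hf Hg. apply annihilated_plus, annihilated_opp; assumption. Qed.

Lemma annihilated_comp_real_poly p f :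
  real_poly p -> annihilated f -> annihilated (fun x => p (f x)).
Proof.
  intros Hp Hf. induction Hp as [c| |p q _ IHp _ IHq|p q _ IHp _ IHq|p q _ IH E].
  - apply annihilated_const.
  - exact Hf.
  - exact (annihilated_plus (fun x => p (f x)) (fun x => q (f x)) IHp IHq).
  - exact (annihilated_mult (fun x => p (f x)) (fun x => q (f x)) IHp IHq).
  - apply (annihilated_ext (fun x => p (f x))); auto.
Qed.

Definition annihilated_C (F : (nat -> R) -> C) : Prop :=
  annihilated (fun x => fst (F x)) /\ annihilated (fun x => snd (F x)).

Lemma annihilated_C_const z : annihilated_C (fun _ => z).
Proof. split; apply annihilated_const. Qed.

Lemma annihilated_C_RtoC f : annihilated f -> annihilated_C (fun x => RtoC (f x)).
Proof. intros Hf. split; cbn; [exact Hf | apply annihilated_const]. Qed.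

Lemma annihilated_C_plus F G : annihilated_C F -> annihilated_C G ->
  annihilated_C (fun x => Cplus (F x) (G x)).
Proof. intros [F1 F2] [G1 G2]. split; simpl; now apply annihilated_plus. Qed.

Lemma annihilated_C_mult F G : annihilated_C F -> annihilated_C G ->
  annihilated_C (fun x => Cmult (F x) (G x)).
Proof.
  intros [F1 F2] [G1 G2]. split; simpl.
  - apply annihilated_minus; now apply annihilated_mult.
  - apply annihilated_plus; now apply annihilated_mult.
Qed.

Lemma annihilated_C_conj F : annihilated_C F -> annihilated_C (fun x => Cconj (F x)).
Proof. intros [F1 F2]. split; simpl; [exact F1 | now apply annihilated_opp]. Qed.

Lemma annihilated_C_pow F m : annihilated_C F -> annihilated_C (fun x => Cpow (F x) m).
Proof.
  intros H. induction m; simpl; [apply annihilated_C_const|].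
  now apply (annihilated_C_mult F (fun x => Cpow (F x) m)).
Qed.

Lemma annihilated_C_csum (F : nat -> (nat -> R) -> C) m : (forall i, annihilated_C (F i)) ->
  annihilated_C (fun x => csum (fun i => F i x) m).
Proof.
  intros H. induction m; simpl; [apply annihilated_C_const|].
  now apply (annihilated_C_plus (fun x => csum (fun i => F i x) m)).
Qed.

Section SphericalHarmonics.

Variable y : (nat -> R) -> vec3.
Hypothesis Hy : forall i, annihilated (fun x => vcoord (y x) i).

Lemma annihilated_C_Ypos l m : annihilated_C (fun x => Ypos l m (y x)).
Proof.
  unfold Ypos. apply (annihilated_C_mult (fun x => RtoC _) (fun x => Cpow _ m)).
  - apply annihilated_C_RtoC, annihilated_mult; [apply annihilated_const|].
    apply (annihilated_comp_real_poly (dLeg l m)); [apply real_poly_dLeg | apply Hy].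
  - apply (annihilated_C_pow (fun x => (vcoord (y x) 0, vcoord (y x) 1))). split; apply Hy.
Qed.

Lemma annihilated_C_Ylm l m : annihilated_C (fun x => Ylm l m (y x)).
Proof.
  unfold Ylm. destruct (0 <=? m)%Z; [apply annihilated_C_Ypos|].
  apply (annihilated_C_mult (fun _ => RtoC _) (fun x => Cconj (Ypos l _ (y x)))).
  - apply annihilated_C_const.
  - apply (annihilated_C_conj (fun x => Ypos l _ (y x))), annihilated_C_Ypos.
Qed.

Lemma annihilated_C_shell L A r : annihilated_C (fun x => shell L A r (y x)).
Proof.
  unfold shell. apply (annihilated_C_csum (fun l x => csum _ (2 * l + 1))). intro l.
  apply (annihilated_C_csum (fun j x => Cmult (A r l _) (Ylm l _ (y x)))). intro j.
  apply (annihilated_C_mult (fun _ => _) (fun x => Ylm l _ (y x))).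
  - apply annihilated_C_const.
  - apply annihilated_C_Ylm.
Qed.

End SphericalHarmonics.

Lemma annihilated_rot_inv_apply (M : (nat -> R) -> mat3) p :
  (forall i j, annihilated (fun x => M x i j)) ->
  forall i, annihilated (fun x => vcoord (rot_inv_apply (M x) p) i).
Proof.
  intros HM i. unfold rot_inv_apply, mat_vec, transpose.
  destruct i as [|[|i]]; simpl; repeat apply annihilated_plus;
    apply (annihilated_mult (fun x => M x _ _) (fun _ => _)); auto; apply annihilated_const.
Qed.

End FirstOrderOperator.

(** * Left invariance of the Haar integral in Euler angles *)

Ltac solve_trig_poly :=
  repeat first [ assumption | lia
    | apply trig_poly_plus | apply trig_poly_mult | apply trig_poly_opp
    | apply trig_poly_pRInt | apply trig_poly_pderive
    | apply trig_poly_sin | apply trig_poly_cos | apply trig_poly_const ].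

Section EulerAngles.

(* A point [x] encodes the angle [t = x 0] of an extra left rotation and the Euler angles
   [(a, b, c) = (x 1, x 2, x 3)]. *)

Local Notation a x := (x 1%nat).
Local Notation b x := (x 2%nat).

(* Integrating out c, then b, then a: the generator of the Ry action is divergence-free for
   the measure sin b da db dc. *)
Lemma pRInt_c_flow g z : trig_poly 4 g ->
  pRInt 3 0 (2 * PI) (fun y => sin (b y) * cos (a y) * pderive 2 g y
                               - cos (b y) * sin (a y) * pderive 1 g y
                               + sin (a y) * pderive 3 g y) z
  = sin (b z) * cos (a z) * pderive 2 (pRInt 3 0 (2 * PI) g) z
    - cos (b z) * sin (a z) * pderive 1 (pRInt 3 0 (2 * PI) g) z.
Proof.
  intros Hg.
  rewrite (pRInt_ext 3 0 (2 * PI) _ (fun y => (sin (b y) * cos (a y) * pderive 2 g y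
      + (- (cos (b y) * sin (a y))) * pderive 1 g y) + sin (a y) * pderive 3 g y))
    by (intros; ring).
  rewrite !(pRInt_plus 4), !(pRInt_scal 4), (pRInt_pderive 4), (trig_poly_periodic 4)
    by (reflexivity || solve_trig_poly).
  rewrite !(pderive_pRInt_comm 4) by (lia || solve_trig_poly). ring.
Qed.

Lemma pRInt_b_flow g z : trig_poly 4 g ->
  pRInt 2 0 PI (fun y => sin (b y) * cos (a y) * pderive 2 g y
                         - cos (b y) * sin (a y) * pderive 1 g y) z
  = - cos (a z) * pRInt 2 0 PI (fun y => cos (b y) * g y) z
    - sin (a z) * pderive 1 (pRInt 2 0 PI (fun y => cos (b y) * g y)) z.
Proof.
  intros Hg.
  rewrite (pRInt_ext 2 0 PI _ (fun y => cos (a y) * (pderive 2 (fun w => sin (b w) * g w) y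
      + - (cos (b y) * g y)) + (- sin (a y)) * pderive 1 (fun w => cos (b w) * g w) y)).
  2:{ intro y. rewrite !(pderive_mult 4), pderive_sin, (pderive_indep 1 (fun w => cos (b w)))
        by (reflexivity || solve_trig_poly). ring. }
  rewrite (pRInt_plus 4), !(pRInt_scal 4), (pRInt_plus 4), (pRInt_pderive 4), (pRInt_opp 4),
    <- (pderive_pRInt_comm 4) by (reflexivity || lia || solve_trig_poly).
  rewrite !upd_eq, sin_PI, sin_0. ring.
Qed.

Lemma pRInt_a_flow h z : trig_poly 4 h ->
  pRInt 1 0 (2 * PI) (fun y => - cos (a y) * h y - sin (a y) * pderive 1 h y) z = 0.
Proof.
  intros Hh.
  rewrite (pRInt_ext 1 0 (2 * PI) _ (fun y => - pderive 1 (fun w => sin (a w) * h w) y)).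
  2:{ intro y. rewrite (pderive_mult 4), pderive_sin by solve_trig_poly. ring. }
  rewrite (pRInt_opp 4), (pRInt_pderive 4) by solve_trig_poly.
  rewrite !upd_eq, sin_2PI, sin_0. ring.
Qed.

Definition euler_RInt (f : (nat -> R) -> R) : (nat -> R) -> R :=
  pRInt 1 0 (2 * PI) (pRInt 2 0 PI (pRInt 3 0 (2 * PI) (fun y => sin (b y) * f y))).

Lemma trig_poly_euler_RInt f : trig_poly 4 f -> trig_poly 4 (euler_RInt f).
Proof. intros Hf. unfold euler_RInt. solve_trig_poly. Qed.

Lemma pderive_0_euler_RInt f x : trig_poly 4 f ->
  pderive 0 (euler_RInt f) x = euler_RInt (pderive 0 f) x.
Proof.
  intros Hf. unfold euler_RInt.
  rewrite (pderive_pRInt_comm 4) by (lia || solve_trig_poly). apply pRInt_ext; intro y.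
  rewrite (pderive_pRInt_comm 4) by (lia || solve_trig_poly). apply pRInt_ext; intro z.
  rewrite (pderive_pRInt_comm 4) by (lia || solve_trig_poly). apply pRInt_ext; intro w.
  rewrite (pderive_mult 4), (pderive_indep 0 (fun u => sin (b u)))
    by (reflexivity || solve_trig_poly).
  ring.
Qed.

(* Infinitesimal generators of left multiplication by [Ry t] and [Rz t] in the coordinates
   [(t, a, b, c)]. *)
Definition Ry_field (v : nat) (x : nat -> R) : R :=
  match v with
  | 0%nat => sin (b x)
  | 1%nat => cos (b x) * sin (a x)
  | 2%nat => - (sin (b x) * cos (a x))
  | 3%nat => - sin (a x)
  | _ => 0
  end.

Definition Rz_field (v : nat) (x : nat -> R) : R :=
  match v with 0%nat => 1 | 1%nat => -1 | _ => 0 end.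

Lemma euler_RInt_Ry_invariant f x t : annihilated 4 Ry_field f ->
  euler_RInt f (upd x 0 t) = euler_RInt f (upd x 0 0).
Proof.
  intros [Hf Hpde]. apply (trig_poly_pderive_0_const 4); [lia | now apply trig_poly_euler_RInt |].
  intro y. rewrite pderive_0_euler_RInt by exact Hf. unfold euler_RInt.
  set (g := pRInt 3 0 (2 * PI) f).
  etransitivity; [|apply (pRInt_a_flow (pRInt 2 0 PI (fun y => cos (b y) * g y))); unfold g;
                   solve_trig_poly].
  apply pRInt_ext; intro z. rewrite <- pRInt_b_flow by (unfold g; solve_trig_poly).
  apply pRInt_ext; intro w. unfold g. rewrite <- pRInt_c_flow by exact Hf.
  apply pRInt_ext; intro u.
  specialize (Hpde u). unfold diff_op, Ry_field in Hpde. simpl in Hpde. lra.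
Qed.

Lemma euler_RInt_Rz_invariant f x t : annihilated 4 Rz_field f ->
  euler_RInt f (upd x 0 t) = euler_RInt f (upd x 0 0).
Proof.
  intros [Hf Hpde]. apply (trig_poly_pderive_0_const 4); [lia | now apply trig_poly_euler_RInt |].
  intro y. rewrite pderive_0_euler_RInt by exact Hf. unfold euler_RInt.
  set (h := pRInt 2 0 PI (pRInt 3 0 (2 * PI) (fun u => sin (b u) * f u))).
  transitivity (pRInt 1 0 (2 * PI) (pderive 1 h) y).
  - apply pRInt_ext; intro z. unfold h.
    rewrite (pderive_pRInt_comm 4) by (lia || solve_trig_poly). apply pRInt_ext; intro w.
    rewrite (pderive_pRInt_comm 4) by (lia || solve_trig_poly). apply pRInt_ext; intro u.
    rewrite (pderive_mult 4), (pderive_indep 1 (fun v => sin (b v)))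
      by (reflexivity || solve_trig_poly).
    specialize (Hpde u). unfold diff_op, Rz_field in Hpde. simpl in Hpde. nra.
  - rewrite (pRInt_pderive 4), (trig_poly_periodic 4) by (lia || unfold h; solve_trig_poly). ring.
Qed.

End EulerAngles.

Definition dRy (t : R) : mat3 := fun i j =>
  match i, j with
  | 0%nat, 0%nat => - sin t | 0%nat, 2%nat => cos t
  | 2%nat, 0%nat => - cos t | 2%nat, 2%nat => - sin t
  | _, _ => 0 end.

Definition dRz (t : R) : mat3 := fun i j =>
  match i, j with
  | 0%nat, 0%nat => - sin t | 0%nat, 1%nat => - cos t
  | 1%nat, 0%nat => cos t | 1%nat, 1%nat => - sin t
  | _, _ => 0 end.

Lemma is_derive_Ry i j t : is_derive (fun s => Ry s i j) t (dRy t i j).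
Proof.
  unfold Ry, dRy. destruct i as [|[|[|i]]]; destruct j as [|[|[|j]]]; auto_derive; auto; ring.
Qed.

Lemma is_derive_Rz i j t : is_derive (fun s => Rz s i j) t (dRz t i j).
Proof.
  unfold Rz, dRz. destruct i as [|[|[|i]]]; destruct j as [|[|[|j]]]; auto_derive; auto; ring.
Qed.

Lemma is_derive_mult_const_r (f : R -> R) t d c :
  is_derive f t d -> is_derive (fun s => f s * c) t (d * c).
Proof. exact (is_derive_scal_l (V := R_NormedModule) f t d c). Qed.

Lemma is_derive_mat_mul_l (F : R -> mat3) D B i j t :
  (forall i k, is_derive (fun s => F s i k) t (D i k)) ->
  is_derive (fun s => mat_mul (F s) B i j) t (mat_mul D B i j).
Proof.
  intros H. unfold mat_mul.
  repeat apply (is_derive_plus (V := R_NormedModule)); now apply is_derive_mult_const_r.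
Qed.

Lemma is_derive_mat_mul_r A (F : R -> mat3) D i j t :
  (forall k j, is_derive (fun s => F s k j) t (D k j)) ->
  is_derive (fun s => mat_mul A (F s) i j) t (mat_mul A D i j).
Proof.
  intros H. unfold mat_mul.
  repeat apply (is_derive_plus (V := R_NormedModule)); now apply is_derive_scal.
Qed.

Definition left_euler (R0 : R -> mat3) (x : nat -> R) : mat3 :=
  mat_mul (R0 (x 0%nat)) (euler (x 1%nat) (x 2%nat) (x 3%nat)).

Section LeftEulerDerivatives.

Variables R0 dR0 : R -> mat3.
Hypothesis is_derive_R0 : forall i j t, is_derive (fun s => R0 s i j) t (dR0 t i j).

Lemma pderive_left_euler_0 i j x : pderive 0 (fun y => left_euler R0 y i j) x
  = mat_mul (dR0 (x 0%nat)) (euler (x 1%nat) (x 2%nat) (x 3%nat)) i j.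
Proof.
  unfold pderive, left_euler. cbn [upd Nat.eqb].
  apply is_derive_unique, is_derive_mat_mul_l. auto.
Qed.

Lemma pderive_left_euler_1 i j x : pderive 1 (fun y => left_euler R0 y i j) x
  = mat_mul (R0 (x 0%nat)) (mat_mul (dRz (x 1%nat)) (mat_mul (Ry (x 2%nat)) (Rz (x 3%nat)))) i j.
Proof.
  unfold pderive, left_euler, euler. cbn [upd Nat.eqb].
  apply is_derive_unique, is_derive_mat_mul_r. intros.
  apply is_derive_mat_mul_l. intros. apply is_derive_Rz.
Qed.

Lemma pderive_left_euler_2 i j x : pderive 2 (fun y => left_euler R0 y i j) x
  = mat_mul (R0 (x 0%nat)) (mat_mul (Rz (x 1%nat)) (mat_mul (dRy (x 2%nat)) (Rz (x 3%nat)))) i j.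
Proof.
  unfold pderive, left_euler, euler. cbn [upd Nat.eqb].
  apply is_derive_unique, is_derive_mat_mul_r. intros.
  apply is_derive_mat_mul_r. intros. apply is_derive_mat_mul_l. intros. apply is_derive_Ry.
Qed.

Lemma pderive_left_euler_3 i j x : pderive 3 (fun y => left_euler R0 y i j) x
  = mat_mul (R0 (x 0%nat)) (mat_mul (Rz (x 1%nat)) (mat_mul (Ry (x 2%nat)) (dRz (x 3%nat)))) i j.
Proof.
  unfold pderive, left_euler, euler. cbn [upd Nat.eqb].
  apply is_derive_unique, is_derive_mat_mul_r. intros.
  apply is_derive_mat_mul_r. intros. apply is_derive_mat_mul_r. intros. apply is_derive_Rz.
Qed.

End LeftEulerDerivatives.

Lemma trig_poly_Ry_entry v i j : (v < 4)%nat -> trig_poly 4 (fun x => Ry (x v) i j).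
Proof.
  intros Hv. unfold Ry. destruct i as [|[|[|i]]]; destruct j as [|[|[|j]]]; solve_trig_poly.
Qed.

Lemma trig_poly_Rz_entry v i j : (v < 4)%nat -> trig_poly 4 (fun x => Rz (x v) i j).
Proof.
  intros Hv. unfold Rz. destruct i as [|[|[|i]]]; destruct j as [|[|[|j]]]; solve_trig_poly.
Qed.

Lemma trig_poly_mat_mul (F G : (nat -> R) -> mat3) i j :
  (forall i k, trig_poly 4 (fun x => F x i k)) -> (forall k j, trig_poly 4 (fun x => G x k j)) ->
  trig_poly 4 (fun x => mat_mul (F x) (G x) i j).
Proof. intros HF HG. unfold mat_mul. repeat apply trig_poly_plus; now apply trig_poly_mult. Qed.

Lemma trig_poly_left_euler R0 i j : (forall i j, trig_poly 4 (fun x => R0 (x 0%nat) i j)) ->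
  trig_poly 4 (fun x => left_euler R0 x i j).
Proof.
  intros H0. unfold left_euler, euler.
  repeat (apply trig_poly_mat_mul; intros); auto using trig_poly_Ry_entry, trig_poly_Rz_entry.
Qed.

Lemma cos2_eq t : cos t ^ 2 = 1 - sin t ^ 2.
Proof. pose proof (sin2_cos2 t) as H. unfold Rsqr in H. nra. Qed.

Lemma sin2_eq t : sin t ^ 2 = 1 - cos t ^ 2.
Proof. rewrite cos2_eq. ring. Qed.

Lemma annihilated_Ry_left_euler i j : annihilated 4 Ry_field (fun x => left_euler Ry x i j).
Proof.
  split; [apply trig_poly_left_euler; intros; apply trig_poly_Ry_entry; lia|]. intro x.
  unfold diff_op. cbn [sum_upto].
  rewrite (pderive_left_euler_0 Ry dRy), (pderive_left_euler_1 Ry), (pderive_left_euler_2 Ry),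
    (pderive_left_euler_3 Ry) by apply is_derive_Ry.
  unfold Ry_field, euler, mat_mul, Ry, Rz, dRy, dRz.
  destruct i as [|[|[|i]]]; destruct j as [|[|[|j]]]; ring_simplify; try rewrite !cos2_eq; ring.
Qed.

Lemma annihilated_Rz_left_euler i j : annihilated 4 Rz_field (fun x => left_euler Rz x i j).
Proof.
  split; [apply trig_poly_left_euler; intros; apply trig_poly_Rz_entry; lia|]. intro x.
  unfold diff_op. cbn [sum_upto].
  rewrite (pderive_left_euler_0 Rz dRz), (pderive_left_euler_1 Rz), (pderive_left_euler_2 Rz),
    (pderive_left_euler_3 Rz) by apply is_derive_Rz.
  unfold Rz_field, euler, mat_mul, Ry, Rz, dRy, dRz.
  destruct i as [|[|[|i]]]; destruct j as [|[|[|j]]]; ring_simplify; try rewrite !cos2_eq; ring.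
Qed.

Definition euler_point (t a b c : R) : nat -> R :=
  fun v => match v with 0%nat => t | 1%nat => a | 2%nat => b | 3%nat => c | _ => 0 end.

Lemma RInt_C_pRInt (f g : (nat -> R) -> R) v lo hi x :
  (v < 4)%nat -> trig_poly 4 f -> trig_poly 4 g ->
  RInt (V := C_R_CompleteNormedModule) (fun t => (f (upd x v t), g (upd x v t))) lo hi
  = (pRInt v lo hi f x, pRInt v lo hi g x).
Proof.
  intros Hv Hf Hg. apply (is_RInt_unique (V := C_R_CompleteNormedModule)).
  apply (is_RInt_fct_extend_pair (U := R_NormedModule) (V := R_NormedModule)
           (fun t => (f (upd x v t), g (upd x v t))));
    now apply (is_RInt_trig_poly 4).
Qed.

Lemma haar_integrand_euler_RInt (F : (nat -> R) -> C) t :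
  trig_poly 4 (fun x => fst (F x)) -> trig_poly 4 (fun x => snd (F x)) ->
  RInt (V := C_R_CompleteNormedModule) (fun a =>
    RInt (V := C_R_CompleteNormedModule) (fun b =>
      RInt (V := C_R_CompleteNormedModule) (fun c =>
        Cmult (RtoC (sin b)) (F (euler_point t a b c))) 0 (2 * PI)) 0 PI) 0 (2 * PI)
  = (euler_RInt (fun x => fst (F x)) (euler_point t 0 0 0),
     euler_RInt (fun x => snd (F x)) (euler_point t 0 0 0)).
Proof.
  intros H1 H2. unfold euler_RInt.
  rewrite <- (RInt_C_pRInt _ _ 1 0 (2 * PI)) by (lia || solve_trig_poly).
  apply RInt_ext. intros a _.
  rewrite <- (RInt_C_pRInt _ _ 2 0 PI) by (lia || solve_trig_poly).
  apply RInt_ext. intros b _.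
  rewrite <- (RInt_C_pRInt _ _ 3 0 (2 * PI)) by (lia || solve_trig_poly).
  apply RInt_ext. intros c _.
  replace (upd (upd (upd (euler_point t 0 0 0) 1 a) 2 b) 3 c) with (euler_point t a b c)
    by (apply functional_extensionality; intros [|[|[|[|v]]]]; reflexivity).
  unfold Cmult, RtoC. simpl. f_equal; ring.
Qed.

Lemma haar_int_left_invariant (R0 : R -> mat3) k (Psi : mat3 -> C) t :
  (forall f x s, annihilated 4 k f -> euler_RInt f (upd x 0 s) = euler_RInt f (upd x 0 0)) ->
  annihilated_C 4 k (fun x => Psi (left_euler R0 x)) ->
  haar_int (fun g => Psi (mat_mul (R0 t) g)) = haar_int (fun g => Psi (mat_mul (R0 0) g)).
Proof.
  intros Hinv [H1 H2]. unfold haar_int. apply (f_equal (Cmult _)).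
  assert (Hpt : forall s, euler_point s 0 0 0 = upd (euler_point 0 0 0 0) 0 s)
    by (intro s; apply functional_extensionality; intros [|[|[|[|v]]]]; reflexivity).
  transitivity (euler_RInt (fun x => fst (Psi (left_euler R0 x))) (euler_point t 0 0 0),
                euler_RInt (fun x => snd (Psi (left_euler R0 x))) (euler_point t 0 0 0)).
  { exact (haar_integrand_euler_RInt (fun x => Psi (left_euler R0 x)) t (proj1 H1) (proj1 H2)). }
  transitivity (euler_RInt (fun x => fst (Psi (left_euler R0 x))) (euler_point 0 0 0 0),
                euler_RInt (fun x => snd (Psi (left_euler R0 x))) (euler_point 0 0 0 0)).
  { rewrite (Hpt t), (Hinv _ _ t H1), (Hinv _ _ t H2), <- (Hpt 0). reflexivity. }
  symmetry.
  exact (haar_integrand_euler_RInt (fun x => Psi (left_euler R0 x)) 0 (proj1 H1) (proj1 H2)).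
Qed.

(** * The second moment as a rotation-invariant function of two points *)

Definition moment_integrand (L : nat) (A : coeffs) (r1 r2 : nat) (p1 p2 : vec3) (g : mat3) : C :=
  Cmult (shell L A r1 (rot_inv_apply g p1)) (Cconj (shell L A r2 (rot_inv_apply g p2))).

Definition moment (L : nat) (A : coeffs) (r1 r2 : nat) (p1 p2 : vec3) : C :=
  haar_int (moment_integrand L A r1 r2 p1 p2).

Lemma m2_moment L A r1 r2 th1 ph1 th2 ph2 :
  m2 L A r1 r2 th1 ph1 th2 ph2 = moment L A r1 r2 (sph th1 ph1) (sph th2 ph2).
Proof. reflexivity. Qed.

Lemma m2proj_moment L A r1 r2 ph1 ph2 :
  m2proj L A r1 r2 ph1 ph2 = moment L A r1 r2 (sph (PI / 2) ph1) (sph (PI / 2) ph2).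
Proof. reflexivity. Qed.

Lemma annihilated_C_moment_integrand k (M : (nat -> R) -> mat3) L A r1 r2 p1 p2 :
  (forall i j, annihilated 4 k (fun x => M x i j)) ->
  annihilated_C 4 k (fun x => moment_integrand L A r1 r2 p1 p2 (M x)).
Proof.
  intros HM. unfold moment_integrand.
  apply (annihilated_C_mult 4 k (fun x => shell L A r1 (rot_inv_apply (M x) p1))
           (fun x => Cconj (shell L A r2 (rot_inv_apply (M x) p2)))).
  - apply annihilated_C_shell, annihilated_rot_inv_apply, HM.
  - apply (annihilated_C_conj 4 k (fun x => shell L A r2 (rot_inv_apply (M x) p2))).
    apply annihilated_C_shell, annihilated_rot_inv_apply, HM.
Qed.

Lemma vec3_ext (a b c a' b' c' : R) : a = a' -> b = b' -> c = c' -> ((a, b), c) = ((a', b'), c').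
Proof. now intros -> -> ->. Qed.

Lemma rot_inv_apply_Ry g a p :
  rot_inv_apply g (mat_vec (Ry a) p) = rot_inv_apply (mat_mul (Ry (- a)) g) p.
Proof.
  destruct p as [[p0 p1] p2]. unfold rot_inv_apply, mat_vec, transpose, mat_mul, Ry. simpl.
  rewrite cos_neg, sin_neg. apply vec3_ext; ring.
Qed.

Lemma rot_inv_apply_Rz g a p :
  rot_inv_apply g (mat_vec (Rz a) p) = rot_inv_apply (mat_mul (Rz (- a)) g) p.
Proof.
  destruct p as [[p0 p1] p2]. unfold rot_inv_apply, mat_vec, transpose, mat_mul, Rz. simpl.
  rewrite cos_neg, sin_neg. apply vec3_ext; ring.
Qed.

Lemma rot_inv_apply_Ry_0 g p : rot_inv_apply (mat_mul (Ry 0) g) p = rot_inv_apply g p.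
Proof.
  destruct p as [[p0 p1] p2]. unfold rot_inv_apply, mat_vec, transpose, mat_mul, Ry. simpl.
  rewrite cos_0, sin_0. apply vec3_ext; ring.
Qed.

Lemma rot_inv_apply_Rz_0 g p : rot_inv_apply (mat_mul (Rz 0) g) p = rot_inv_apply g p.
Proof.
  destruct p as [[p0 p1] p2]. unfold rot_inv_apply, mat_vec, transpose, mat_mul, Rz. simpl.
  rewrite cos_0, sin_0. apply vec3_ext; ring.
Qed.

Lemma moment_left_invariant (R0 : R -> mat3) k L A r1 r2 a p1 p2 :
  (forall g p, rot_inv_apply g (mat_vec (R0 a) p) = rot_inv_apply (mat_mul (R0 (- a)) g) p) ->
  (forall g p, rot_inv_apply (mat_mul (R0 0) g) p = rot_inv_apply g p) ->
  (forall f x s, annihilated 4 k f -> euler_RInt f (upd x 0 s) = euler_RInt f (upd x 0 0)) ->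
  (forall i j, annihilated 4 k (fun x => left_euler R0 x i j)) ->
  moment L A r1 r2 (mat_vec (R0 a) p1) (mat_vec (R0 a) p2) = moment L A r1 r2 p1 p2.
Proof.
  intros Hmove H0 Hinv Hentries. unfold moment.
  transitivity (haar_int (fun g => moment_integrand L A r1 r2 p1 p2 (mat_mul (R0 (- a)) g))).
  { apply f_equal, functional_extensionality. intro g.
    unfold moment_integrand. now rewrite !Hmove. }
  rewrite (haar_int_left_invariant R0 k) by auto using annihilated_C_moment_integrand.
  apply f_equal, functional_extensionality. intro g.
  unfold moment_integrand. now rewrite !H0.
Qed.

Inductive yz_rotation_map : (vec3 -> vec3) -> Prop :=
| yz_rotation_map_id : yz_rotation_map (fun p => p)
| yz_rotation_map_Ry a T : yz_rotation_map T -> yz_rotation_map (fun p => mat_vec (Ry a) (T p))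
| yz_rotation_map_Rz a T : yz_rotation_map T -> yz_rotation_map (fun p => mat_vec (Rz a) (T p)).

Lemma moment_yz_rotation_invariant L A r1 r2 T p1 p2 : yz_rotation_map T ->
  moment L A r1 r2 (T p1) (T p2) = moment L A r1 r2 p1 p2.
Proof.
  induction 1 as [|a T _ IH|a T _ IH]; [reflexivity| |]; rewrite <- IH.
  - apply (moment_left_invariant Ry Ry_field);
      auto using rot_inv_apply_Ry, rot_inv_apply_Ry_0, euler_RInt_Ry_invariant,
                 annihilated_Ry_left_euler.
  - apply (moment_left_invariant Rz Rz_field);
      auto using rot_inv_apply_Rz, rot_inv_apply_Rz_0, euler_RInt_Rz_invariant,
                 annihilated_Rz_left_euler.
Qed.

(** * Rotating a pair of points onto the equator *)

Lemma polar_coordinates u v :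
  exists g, u = sqrt (u ^ 2 + v ^ 2) * cos g /\ v = sqrt (u ^ 2 + v ^ 2) * sin g.
Proof.
  set (r := sqrt (u ^ 2 + v ^ 2)).
  assert (Hr2 : r * r = u ^ 2 + v ^ 2) by (apply sqrt_sqrt; nra).
  assert (Hr0 : 0 <= r) by apply sqrt_pos.
  destruct (Req_dec r 0) as [Hz|Hnz].
  { exists 0. rewrite Hz in Hr2 |- *. split; nra. }
  assert (Hc : -1 <= u / r <= 1).
  { assert (Hu : -r <= u <= r) by (split; nra).
    assert (Hw : r * / r = 1) by (field; lra).
    assert (0 < / r) by (apply Rinv_0_lt_compat; lra).
    unfold Rdiv. split; nra. }
  assert (Hs : (v / r)² = 1 - (u / r)²).
  { unfold Rsqr.
    replace (v / r * (v / r)) with (v * v / (r * r)) by (field; lra).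
    replace (1 - u / r * (u / r)) with ((r * r - u * u) / (r * r)) by (field; lra).
    f_equal. nra. }
  destruct (Rle_dec 0 v) as [Hv|Hv].
  - exists (acos (u / r)).
    rewrite cos_acos, sin_acos, <- Hs, sqrt_Rsqr by (auto; apply Rle_mult_inv_pos; lra).
    split; field; lra.
  - exists (- acos (u / r)). rewrite cos_neg, sin_neg, cos_acos, sin_acos by exact Hc.
    replace (1 - (u / r)²) with ((- v / r)²) by (rewrite <- Hs; unfold Rsqr; field; lra).
    rewrite sqrt_Rsqr by (apply Rle_mult_inv_pos; lra). split; field; lra.
Qed.

Lemma mat_vec_Rz a x y z :
  mat_vec (Rz a) ((x, y), z) = ((cos a * x - sin a * y, sin a * x + cos a * y), z).
Proof. unfold mat_vec, Rz. simpl. apply vec3_ext; ring. Qed.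

Lemma mat_vec_Ry a x y z :
  mat_vec (Ry a) ((x, y), z) = ((cos a * x + sin a * z, y), - sin a * x + cos a * z).
Proof. unfold mat_vec, Ry. simpl. apply vec3_ext; ring. Qed.

Definition sq_norm (p : vec3) : R := let '((x, y), z) := p in x ^ 2 + y ^ 2 + z ^ 2.

Lemma sq_norm_yz_rotation T p : yz_rotation_map T -> sq_norm (T p) = sq_norm p.
Proof.
  induction 1 as [|a T _ IH|a T _ IH]; [reflexivity| |];
    rewrite <- IH; destruct (T p) as [[x y] z];
    rewrite ?mat_vec_Ry, ?mat_vec_Rz; simpl; ring_simplify; rewrite !sin2_eq; ring.
Qed.

Lemma sq_norm_sph th ph : sq_norm (sph th ph) = 1.
Proof. unfold sph. simpl. ring_simplify. rewrite !sin2_eq. ring. Qed.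

Lemma sph_to_x_axis th ph :
  mat_vec (Ry (PI / 2 - th)) (mat_vec (Rz (- ph)) (sph th ph)) = ((1, 0), 0).
Proof.
  unfold sph. rewrite mat_vec_Rz, mat_vec_Ry, cos_neg, sin_neg, cos_shift, sin_shift.
  apply vec3_ext.
  - transitivity (sin th ^ 2 * (cos ph ^ 2 + sin ph ^ 2) + cos th ^ 2); [ring|].
    rewrite cos2_eq. ring_simplify. rewrite sin2_eq. ring.
  - ring.
  - transitivity (cos th * sin th * (1 - (cos ph ^ 2 + sin ph ^ 2))); [ring|].
    rewrite cos2_eq. ring.
Qed.

Lemma x_axis_rotation qx qy qz : exists T, yz_rotation_map T /\
  T ((1, 0), 0) = ((1, 0), 0) /\ T ((qx, qy), qz) = ((qx, sqrt (qy ^ 2 + qz ^ 2)), 0).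
Proof.
  destruct (polar_coordinates qy (- qz)) as [g [Hy Hz]].
  replace ((- qz) ^ 2) with (qz ^ 2) in Hy, Hz by ring.
  set (rho := sqrt (qy ^ 2 + qz ^ 2)) in *.
  exists (fun p => mat_vec (Rz (- (PI / 2))) (mat_vec (Ry g) (mat_vec (Rz (PI / 2)) p))).
  split; [repeat constructor|].
  rewrite !mat_vec_Rz, !mat_vec_Ry, !mat_vec_Rz, cos_neg, sin_neg, cos_PI2, sin_PI2.
  split; apply vec3_ext; try ring.
  - transitivity (cos g * qy - sin g * qz); [ring|].
    replace qz with (- (- qz)) by ring. rewrite Hy at 1. rewrite Hz.
    transitivity (rho * (cos g ^ 2 + sin g ^ 2)); [ring|]. rewrite cos2_eq. ring.
  - transitivity (sin g * qy + cos g * qz); [ring|].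
    replace qz with (- (- qz)) by ring. rewrite Hy at 1. rewrite Hz. ring.
Qed.

Lemma yz_rotation_map_comp T U : yz_rotation_map T -> yz_rotation_map U ->
  yz_rotation_map (fun p => U (T p)).
Proof. intros HT HU. induction HU; [exact HT | now constructor ..]. Qed.

Lemma equator_sph x y : x ^ 2 + y ^ 2 = 1 -> exists psi, ((x, y), 0) = sph (PI / 2) psi.
Proof.
  intros H. destruct (polar_coordinates x y) as [psi [Hx Hy]].
  rewrite H, sqrt_1 in Hx, Hy. exists psi.
  unfold sph. rewrite sin_PI2, cos_PI2. apply vec3_ext; lra.
Qed.

Lemma sph_pair_to_equator th1 ph1 th2 ph2 : exists T psi, yz_rotation_map T /\
  T (sph th1 ph1) = sph (PI / 2) 0 /\ T (sph th2 ph2) = sph (PI / 2) psi.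
Proof.
  set (T1 := fun p => mat_vec (Ry (PI / 2 - th1)) (mat_vec (Rz (- ph1)) p)).
  assert (HT1 : yz_rotation_map T1) by (repeat constructor).
  destruct (T1 (sph th2 ph2)) as [[qx qy] qz] eqn:Eq.
  assert (Hq : qx ^ 2 + qy ^ 2 + qz ^ 2 = 1).
  { change (sq_norm ((qx, qy), qz) = 1).
    rewrite <- Eq, sq_norm_yz_rotation by exact HT1. apply sq_norm_sph. }
  destruct (x_axis_rotation qx qy qz) as (T2 & HT2 & E1 & E2).
  destruct (equator_sph qx (sqrt (qy ^ 2 + qz ^ 2))) as [psi Hpsi].
  { rewrite pow2_sqrt by nra. lra. }
  exists (fun p => T2 (T1 p)), psi.
  split; [now apply yz_rotation_map_comp|]. split.
  - unfold T1. rewrite sph_to_x_axis, E1.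
    unfold sph. rewrite sin_PI2, cos_PI2, cos_0, sin_0. apply vec3_ext; ring.
  - now rewrite Eq, E2.
Qed.

Theorem lemma4p1 (L R : nat) (hR : (1 <= R)%nat) (A A' : coeffs) :
  (forall (r1 r2 : nat) (ph1 ph2 : Rdefinitions.R),
      (1 <= r1 <= R)%nat -> (1 <= r2 <= R)%nat ->
      m2proj L A r1 r2 ph1 ph2 = m2proj L A' r1 r2 ph1 ph2)
  <->
  (forall (r1 r2 : nat) (th1 ph1 th2 ph2 : Rdefinitions.R),
      (1 <= r1 <= R)%nat -> (1 <= r2 <= R)%nat ->
      m2 L A r1 r2 th1 ph1 th2 ph2 = m2 L A' r1 r2 th1 ph1 th2 ph2).
Proof.
  split.
  - intros Hproj r1 r2 th1 ph1 th2 ph2 H1 H2. rewrite !m2_moment.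
    destruct (sph_pair_to_equator th1 ph1 th2 ph2) as (T & psi & HT & E1 & E2).
    rewrite <- (moment_yz_rotation_invariant L A r1 r2 T),
      <- (moment_yz_rotation_invariant L A' r1 r2 T), E1, E2 by exact HT.
    rewrite <- !m2proj_moment. now apply Hproj.
  - intros Hfull r1 r2 ph1 ph2 H1 H2.
    rewrite !m2proj_moment, <- !m2_moment. now apply Hfull.
Qed.
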